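(* Let $G$ be a connected graph and $I\subseteq V(G)$ a pre-cycle core of $G$. Then for any $y,z\in I$, every non-backtracking path in $G$ between $y$ and $z$ is contained in the induced subgraph $G|_I$.
   Context: Graphs are simple and unoriented, possibly infinite. A cycle in $G$ is a closed path $(x_0,\dots,x_n=x_0)$ with no repeated vertices except $x_0=x_n$ and no edges $(x_i,x_j)$ of $G$ with $i-j\not\equiv0,\pm1\pmod n$. A pre-cycle core of $G$ is a subset $I\subseteq V(G)$ such that $G|_I$ is connected and contains all cycles of $G$. A path is non-backtracking if it never traverses an edge and immediately returns along it. *)

From Stdlib Require Import Arith.

Record graph := Graph {
  vtx : Type;
  adj : vtx -> vtx -> Prop;
  adj_sym : forall x y, adj x y -> adj y x;
  adj_irrefl : forall x, ~ adj x x
}.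

(* A path (walk, repeated vertices allowed) of length n: x_0, ..., x_n
   given as p 0, ..., p n, with consecutive vertices adjacent. *)
Definition is_path (G : graph) (p : nat -> vtx G) (n : nat) : Prop :=
  forall i, i < n -> adj G (p i) (p (S i)).

Definition non_backtracking (G : graph) (p : nat -> vtx G) (n : nat) : Prop :=
  forall i, S (S i) <= n -> p i <> p (S (S i)).

Definition connected (G : graph) : Prop :=
  forall x y : vtx G, exists (p : nat -> vtx G) (n : nat),
    is_path G p n /\ p 0 = x /\ p n = y.

Definition induced_connected (G : graph) (I : vtx G -> Prop) : Prop :=
  forall x y : vtx G, I x -> I y -> exists (p : nat -> vtx G) (n : nat),
    is_path G p n /\ p 0 = x /\ p n = y /\ (forall i, i <= n -> I (p i)).

(* A cycle (x_0, ..., x_n = x_0): closed path, no repeated vertices except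
   x_0 = x_n, no chords (edges x_i x_j with i - j not 0, +-1 mod n).
   In a simple graph such a cycle has n >= 3. *)
Definition is_cycle (G : graph) (p : nat -> vtx G) (n : nat) : Prop :=
  3 <= n /\ is_path G p n /\ p n = p 0 /\
  (forall i j, i < n -> j < n -> p i = p j -> i = j) /\
  (forall i j, i < n -> j < n -> adj G (p i) (p j) ->
     j = S i \/ i = S j \/ (i = 0 /\ j = n - 1) \/ (j = 0 /\ i = n - 1)).

Definition pre_cycle_core (G : graph) (I : vtx G -> Prop) : Prop :=
  induced_connected G I /\
  (forall (p : nat -> vtx G) (n : nat), is_cycle G p n ->
     forall i, i <= n -> I (p i)).

From Stdlib Require Import Arith Lia Classical.

(* Suppose the walk leaves I, and take a maximal excursion p_a, ..., p_b whose
   interior avoids I while p_a and p_b lie in I.  Every simple closed walk of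
   length at least 3 lies in I: a chord splits it into two shorter ones, and a
   chordless one is a cycle.  Hence the interior of the excursion has no
   repeated vertex, since a shortest repetition would be a closed walk of
   length 1 (a loop), 2 (a backtrack) or at least 3 (a simple loop, inside I).
   Closing the excursion by a simple path inside I from p_b back to p_a gives a
   simple loop through p_(a+1), which is not in I: a contradiction. *)

Definition injective_below {A} (p : nat -> A) (n : nat) : Prop :=
  forall s t, s < n -> t < n -> p s = p t -> s = t.

Definition shift {A} (p : nat -> A) (a : nat) : nat -> A := fun k => p (k + a).

Definition cat_walk {A} (p : nat -> A) (l : nat) (q : nat -> A) : nat -> A :=
  fun k => if k <? l then p k else q (k - l).

Definition edge_walk {A} (x y : A) : nat -> A := fun k => if k =? 0 then x else y.

Lemma cat_walk_lt {A} (p q : nat -> A) l k : k < l -> cat_walk p l q k = p k.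
Proof. intros Hk; unfold cat_walk; apply Nat.ltb_lt in Hk; rewrite Hk; reflexivity. Qed.

Ltac walk_cases :=
  unfold cat_walk, edge_walk, shift in *;
  repeat match goal with
  | |- context [?a <? ?b] => destruct (Nat.ltb_spec a b)
  | H : context [?a <? ?b] |- _ => destruct (Nat.ltb_spec a b)
  | |- context [?a =? ?b] => destruct (Nat.eqb_spec a b)
  | H : context [?a =? ?b] |- _ => destruct (Nat.eqb_spec a b)
  end.

Lemma injective_below_of_lt {A} (p : nat -> A) n :
  (forall s t, s < t < n -> p s <> p t) -> injective_below p n.
Proof.
  intros Hlt s t Hs Ht E.
  destruct (lt_eq_lt_dec s t) as [[Hst | Hst] | Hst]; auto; exfalso.
  - exact (Hlt s t ltac:(lia) E).
  - exact (Hlt t s ltac:(lia) (eq_sym E)).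
Qed.

Lemma min_repetition {A} (p : nat -> A) i j : i < j -> p i = p j ->
  exists i' j', i <= i' < j' /\ j' <= j /\ p i' = p j' /\
    injective_below (shift p i') (j' - i').
Proof.
  remember (j - i) as g eqn:Hg; revert i j Hg.
  induction g as [g IH] using lt_wf_ind; intros i j Hg Hij Hrep.
  destruct (classic (exists s t, s < t < j - i /\ p (s + i) = p (t + i)))
    as [(s & t & Hst & Hrep') | Hnone].
  - destruct (IH (t - s) ltac:(lia) (s + i) (t + i) ltac:(lia) ltac:(lia) Hrep')
      as (i' & j' & Hi' & Hj' & Hrep'' & Hinj).
    exists i', j'; repeat split; auto; lia.
  - exists i, j; repeat split; auto; try lia.
    apply injective_below_of_lt; intros s t Hst E; eauto.
Qed.

Lemma last_before (P : nat -> Prop) i :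
  P 0 -> exists a, a <= i /\ P a /\ forall t, a < t <= i -> ~ P t.
Proof.
  intros H0; induction i as [|i IH].
  - exists 0; repeat split; auto; lia.
  - destruct (classic (P (S i))) as [HS | HS].
    + exists (S i); repeat split; auto; lia.
    + destruct IH as (a & Ha & HPa & Hgap); exists a; repeat split; auto.
      intros t Ht; destruct (Nat.eq_dec t (S i)) as [-> | Ht']; auto.
      apply Hgap; lia.
Qed.

Lemma first_after (P : nat -> Prop) i n :
  i <= n -> P n -> exists b, i <= b <= n /\ P b /\ forall t, i <= t < b -> ~ P t.
Proof.
  intros Hin HPn.
  destruct (last_before (fun k => P (n - k)) (n - i)) as (c & Hc & HPc & Hgap).
  { rewrite Nat.sub_0_r; exact HPn. }
  exists (n - c); repeat split; auto; try lia.
  intros t Ht; replace t with (n - (n - t)) by lia; apply Hgap; lia.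
Qed.

Lemma excursion (P : nat -> Prop) n i : P 0 -> P n -> i <= n -> ~ P i ->
  exists a b, a < i < b /\ b <= n /\ P a /\ P b /\ forall t, a < t < b -> ~ P t.
Proof.
  intros H0 Hn Hi Hout.
  destruct (last_before P i H0) as (a & Ha & HPa & Hgapa).
  destruct (first_after P i n Hi Hn) as (b & Hb & HPb & Hgapb).
  assert (a <> i) by (intros ->; contradiction).
  assert (b <> i) by (intros ->; contradiction).
  exists a, b; repeat split; auto; try lia.
  intros t Ht; destruct (le_lt_dec t i); [apply Hgapa | apply Hgapb]; lia.
Qed.

Section Walks.

Variable G : graph.
Implicit Types (p q : nat -> vtx G).

Lemma is_path_shift p n a l : is_path G p n -> l + a <= n -> is_path G (shift p a) l.
Proof. intros Hp Hl k Hk; apply Hp; lia. Qed.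

Lemma is_path_cat p l q m :
  is_path G p l -> is_path G q m -> p l = q 0 -> is_path G (cat_walk p l q) (l + m).
Proof.
  intros Hp Hq Hjoin k Hk; walk_cases; try lia.
  - apply Hp; lia.
  - replace (S k - l) with 0 by lia; rewrite <- Hjoin.
    replace l with (S k) by lia; apply Hp; lia.
  - replace (S k - l) with (S (k - l)) by lia; apply Hq; lia.
Qed.

Lemma is_path_edge x y : adj G x y -> is_path G (edge_walk x y) 1.
Proof. intros Hxy k Hk; replace k with 0 by lia; exact Hxy. Qed.

Definition simple_loop p n : Prop :=
  3 <= n /\ is_path G p n /\ p n = p 0 /\ injective_below p n.

Lemma simple_loop_cat p l q m : 3 <= l + m ->
  is_path G p l -> is_path G q m -> p l = q 0 -> q m = p 0 ->
  injective_below p l -> injective_below q m ->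
  (forall s t, s < l -> t < m -> p s <> q t) ->
  simple_loop (cat_walk p l q) (l + m).
Proof.
  intros Hlen Hp Hq Hjoin Hclose Hinjp Hinjq Hdisj.
  split; [exact Hlen |]; split; [apply is_path_cat; auto |]; split.
  - walk_cases; try lia; replace (l + m - l) with m by lia.
    + exact Hclose.
    + replace l with 0 in * by lia; cbn; congruence.
  - intros s t Hs Ht E; walk_cases.
    + apply Hinjp; auto.
    + destruct (Hdisj s (t - l)); auto; lia.
    + destruct (Hdisj t (s - l)); auto; lia.
    + enough (s - l = t - l) by lia; apply Hinjq; auto; lia.
Qed.

Definition chord p n i j : Prop :=
  i < j < n /\ adj G (p i) (p j) /\ j <> S i /\ ~ (i = 0 /\ j = n - 1).

Lemma chordless_simple_loop_is_cycle p n :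
  simple_loop p n -> (forall i j, ~ chord p n i j) -> is_cycle G p n.
Proof.
  intros (Hlen & Hp & Hclose & Hinj) Hnochord.
  repeat split; auto; intros i j Hi Hj Hadj.
  apply NNPP; intro Hnot.
  destruct (lt_eq_lt_dec i j) as [[Hij | <-] | Hji].
  - apply (Hnochord i j); repeat split; auto; lia.
  - exact (adj_irrefl G _ Hadj).
  - apply (Hnochord j i); repeat split; auto using adj_sym; lia.
Qed.

Lemma simple_loop_chord_inner p n i j : simple_loop p n -> chord p n i j ->
  simple_loop (cat_walk (shift p i) (j - i) (edge_walk (p j) (p i))) (j - i + 1).
Proof.
  intros (_ & Hp & _ & Hinj) (Hij & Hadj & Hnext & _).
  apply simple_loop_cat; try lia.
  - apply (is_path_shift _ n); auto; lia.
  - apply is_path_edge, adj_sym, Hadj.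
  - unfold shift; cbn; f_equal; lia.
  - reflexivity.
  - intros s t Hs Ht E; apply Hinj in E; lia.
  - intros s t Hs Ht _; lia.
  - intros s t Hs Ht E; replace t with 0 in E by lia; apply Hinj in E; lia.
Qed.

Lemma simple_loop_chord_outer p n i j : simple_loop p n -> chord p n i j ->
  simple_loop (cat_walk (cat_walk p i (edge_walk (p i) (p j))) (i + 1) (shift p j))
    (i + 1 + (n - j)).
Proof.
  intros (_ & Hp & Hclose & Hinj) (Hij & Hadj & _ & Hend).
  apply simple_loop_cat; try lia.
  - apply is_path_cat; [intros k Hk; apply Hp; lia | apply is_path_edge, Hadj | reflexivity].
  - apply (is_path_shift _ n); auto; lia.
  - walk_cases; try lia; reflexivity.
  - walk_cases; replace (n - j + j) with n by lia; rewrite Hclose; f_equal; lia.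
  - intros s t Hs Ht E; walk_cases; try lia; apply Hinj in E; lia.
  - intros s t Hs Ht E; apply Hinj in E; lia.
  - intros s t Hs Ht E; walk_cases; try lia; apply Hinj in E; lia.
Qed.

Lemma repetition_simple_loop p n i j : is_path G p n -> non_backtracking G p n ->
  i < j <= n -> p i = p j ->
  exists i' j', i <= i' < j' /\ j' <= j /\ simple_loop (shift p i') (j' - i').
Proof.
  intros Hp Hnb Hij Hrep.
  destruct (min_repetition p i j) as (i' & j' & Hi' & Hj' & Hrep' & Hinj); auto; try lia.
  assert (j' <> S i').
  { intros ->; apply (adj_irrefl G (p i')); rewrite Hrep' at 2; apply Hp; lia. }
  assert (j' <> S (S i')) by (intros ->; apply (Hnb i'); auto; lia).
  exists i', j'; repeat split; auto; try lia.
  - apply (is_path_shift _ n); auto; lia.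
  - unfold shift; rewrite Nat.sub_add by lia; auto.
Qed.

Lemma path_shortening p m : is_path G p m ->
  exists q m', is_path G q m' /\ q 0 = p 0 /\ q m' = p m /\
    injective_below q (S m') /\ forall k, k <= m' -> exists k', k' <= m /\ q k = p k'.
Proof.
  revert p; induction m as [m IH] using lt_wf_ind; intros p Hp.
  destruct (classic (exists s t, s < t <= m /\ p s = p t))
    as [(s & t & Hst & Hrep) | Hnone].
  - destruct (IH (s + (m - t)) ltac:(lia) (cat_walk p s (shift p t)))
      as (q & m' & Hq & Hq0 & Hqm & Hinj & Hsub).
    { apply is_path_cat; [intros k Hk; apply Hp; lia | | exact Hrep].
      apply (is_path_shift _ m); auto; lia. }
    exists q, m'; repeat split; auto.
    + rewrite Hq0; clear - Hst Hrep; walk_cases; auto.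
      replace s with 0 in Hrep by lia; rewrite Hrep; f_equal; lia.
    + rewrite Hqm; clear - Hst; walk_cases; f_equal; lia.
    + intros k Hk; destruct (Hsub k Hk) as (k' & Hk' & ->); clear - Hst Hk'.
      walk_cases; (eexists; split; [| reflexivity]); lia.
  - exists p, m; repeat split; auto.
    + apply injective_below_of_lt; intros s t Hst E; apply Hnone; exists s, t; split; auto; lia.
    + intros k Hk; exists k; auto.
Qed.

Section CycleCover.

Variable I : vtx G -> Prop.

Lemma induced_connected_simple_path x y : induced_connected G I -> I x -> I y ->
  exists q m, is_path G q m /\ q 0 = x /\ q m = y /\ injective_below q (S m) /\
    forall k, k <= m -> I (q k).
Proof.
  intros Hconn Hx Hy.
  destruct (Hconn x y Hx Hy) as (p & m & Hp & Hp0 & Hpm & HpI).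
  destruct (path_shortening p m Hp) as (q & m' & Hq & Hq0 & Hqm & Hinj & Hsub).
  exists q, m'; repeat split; try congruence; auto.
  intros k Hk; destruct (Hsub k Hk) as (k' & Hk' & ->); auto.
Qed.

Hypothesis cycles_in_I : forall p n, is_cycle G p n -> forall i, i <= n -> I (p i).

Lemma simple_loop_in_cycle_cover p n : simple_loop p n -> forall k, k <= n -> I (p k).
Proof.
  revert p; induction n as [n IH] using lt_wf_ind; intros p Hloop k Hk.
  destruct (classic (exists i j, chord p n i j)) as [(i & j & Hchord) | Hnone].
  2: { apply (cycles_in_I p n); auto.
       apply chordless_simple_loop_is_cycle; eauto. }
  pose proof Hchord as (Hij & _ & Hnext & Hend).
  destruct (classic (i <= k <= j)) as [Hin | Hout].
  - replace (p k) with (cat_walk (shift p i) (j - i) (edge_walk (p j) (p i)) (k - i))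
      by (walk_cases; try (f_equal; lia)).
    apply (IH (j - i + 1)); [lia | apply (simple_loop_chord_inner p n); auto | lia].
  - set (outer := cat_walk (cat_walk p i (edge_walk (p i) (p j))) (i + 1) (shift p j)).
    assert (Houter : forall k', k' <= i + 1 + (n - j) -> I (outer k')).
    { apply (IH (i + 1 + (n - j))); [lia | apply (simple_loop_chord_outer p n); auto]. }
    destruct (le_lt_dec k i).
    + replace (p k) with (outer k) by (subst outer; walk_cases; try (f_equal; lia)).
      apply Houter; lia.
    + replace (p k) with (outer (i + 1 + (k - j)))
        by (subst outer; walk_cases; try (f_equal; lia)).
      apply Houter; lia.
Qed.

Lemma excursion_interior_injective p n a b :
  is_path G p n -> non_backtracking G p n -> b <= n ->
  (forall t, a < t < b -> ~ I (p t)) -> forall s t, a < s < t -> t < b -> p s <> p t.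
Proof.
  intros Hp Hnb Hb Hout s t Hs Ht Hrep.
  destruct (repetition_simple_loop p n s t) as (i' & j' & Hi' & Hj' & Hloop); auto; try lia.
  apply (Hout i'); [lia |].
  exact (simple_loop_in_cycle_cover _ _ Hloop 0 ltac:(lia)).
Qed.

Lemma excursion_closes_simple_loop p n a b q m :
  is_path G p n -> non_backtracking G p n -> a + 2 <= b <= n ->
  I (p a) -> (forall t, a < t < b -> ~ I (p t)) ->
  is_path G q m -> q 0 = p b -> q m = p a -> injective_below q (S m) ->
  (forall k, k <= m -> I (q k)) ->
  simple_loop (cat_walk (shift p a) (b - a) q) (b - a + m).
Proof.
  intros Hp Hnb Hab Ha Hout Hq Hq0 Hqm Hinjq HqI.
  apply simple_loop_cat; auto.
  - destruct (Nat.eq_dec m 0) as [-> | Hm]; [| lia].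
    assert (b <> S (S a)) by (intros ->; apply (Hnb a); [lia | congruence]).
    lia.
  - apply (is_path_shift _ n); auto; lia.
  - unfold shift; rewrite Nat.sub_add by lia; auto.
  - apply injective_below_of_lt; intros [| s] t Hst E; unfold shift in E; cbn in E.
    + apply (Hout (t + a)); [lia | rewrite <- E; exact Ha].
    + apply (excursion_interior_injective p n a b Hp Hnb) with (S s + a) (t + a); auto; lia.
  - intros s t Hs Ht; apply Hinjq; lia.
  - intros [| s] t Hs Ht E; unfold shift in E; cbn in E.
    + enough (t = m) by lia; apply Hinjq; try lia; congruence.
    + apply (Hout (S (s + a))); [lia | rewrite E; apply HqI; lia].
Qed.

End CycleCover.

End Walks.

Theorem corollary2p3 (G : graph) (I : vtx G -> Prop) :
  connected G -> pre_cycle_core G I ->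
  forall (y z : vtx G), I y -> I z ->
  forall (p : nat -> vtx G) (n : nat),
    is_path G p n -> non_backtracking G p n -> p 0 = y -> p n = z ->
    forall i, i <= n -> I (p i).
Proof.
  intros _ [Hcore Hcycles] y z Hy Hz p n Hp Hnb Hp0 Hpn i Hi.
  apply NNPP; intro Hout.
  destruct (excursion (fun k => I (p k)) n i) as (a & b & Hab & Hbn & Ha & Hb & Hgap);
    try congruence; auto.
  destruct (induced_connected_simple_path G I (p b) (p a) Hcore Hb Ha)
    as (q & m & Hq & Hq0 & Hqm & Hinjq & HqI).
  apply (Hgap (1 + a)); [lia |].
  change (p (1 + a)) with (shift p a 1).
  rewrite <- (cat_walk_lt (shift p a) q (b - a) 1) by lia.
  apply (simple_loop_in_cycle_cover G I Hcycles _ (b - a + m)); [| lia].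
  apply (excursion_closes_simple_loop G I Hcycles p n); auto; lia.
Qed.
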